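(* Let $\mathbb T$ be a finitary monad corresponding to an algebraic theory over a signature $\Sigma$, and let $B$ be a $\mathbb T$-algebra finitely generated by a finite set $B_0$. For every reactive expression $e\in\mathrm{Exp}_\Sigma(B_0)$ there exist a $\mathbb T$-automaton $m$ (with output algebra $B$ and finite state set $X$) and a state $x\in X$ with $\llbracket e\rrbracket=\llbracket x\rrbracket_m$; conversely, for every such $\mathbb T$-automaton $m$ and every state $x\in X$ there is a reactive expression $e\in\mathrm{Exp}_\Sigma(B_0)$ with $\llbracket e\rrbracket=\llbracket x\rrbracket_m$.
   Context: Fix a finite set of actions $A=\{a_1,\dots,a_n\}$; $LX=B\times X^A$; $L$-coalgebras $(X,o,\partial_a)$ with $\partial_\epsilon(x)=x$, $\partial_{aw}(x)=\partial_w(\partial_a(x))$; $B^{A^*}$ is the final $L$-coalgebra ($o(\sigma)=\sigma(\epsilon)$, $\partial_a\sigma=\lambda w.\sigma(aw)$) and $\llbracket-\rrbracket$ denotes the unique coalgebra morphism into it. $TX$ is the set of $\Sigma$-terms over $X$ modulo the theory; ''finitely generated by $B_0$'' means there is a surjective $\mathbb T$-algebra morphism $TB_0\to B$. A $\mathbb T$-automaton consists of a finite set $X$, the algebra $a^m:TB\to B$, and maps $o^m:X\to B$, $t^m:A\times X\to TX$; its trace semantics is $\llbracket x\rrbracket_m=\llbracket\eta_X(x)\rrbracket_{TX}$, where $TX$ carries the $L$-coalgebra structure $m^\sharp:TX\to B\times(TX)^A$, the unique $\mathbb T$-algebra morphism (for the componentwise algebra structure built from $a^m$ and the free structure on $TX$)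 with $m^\sharp(\eta_X(x))=(o^m(x),\lambda a.\,t^m(a,x))$. Reactive expressions are the closed terms $\delta$ of the grammar $\delta::=x\mid\gamma\mid f(\delta,\dots,\delta)$ ($f\in\Sigma$), $\gamma::=\mu x.\,(a_1.\delta\pitchfork\cdots\pitchfork a_n.\delta\pitchfork\beta)$, $\beta::=b\mid f(\beta,\dots,\beta)$ ($b\in B_0$); their set $\mathrm{Exp}_\Sigma(B_0)$ is an $L$-coalgebra via $o(f(e_1,\dots,e_k))=f^B(o(e_1),\dots,o(e_k))$, $\partial_a(f(e_1,\dots,e_k))=f(\partial_a e_1,\dots,\partial_a e_k)$, $o(\mu x.(a_1.e_1\pitchfork\cdots\pitchfork a_n.e_n\pitchfork\beta))=$ the value of $\beta$ in $B$, $\partial_{a_i}(\mu x.(a_1.e_1\pitchfork\cdots\pitchfork a_n.e_n\pitchfork\beta))=e_i[\mu x.(a_1.e_1\pitchfork\cdots\pitchfork a_n.e_n\pitchfork\beta)/x]$, and $\llbracket e\rrbracket$ is the trace semantics of $e$ in this coalgebra. *)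

From mathcomp Require Import all_boot.
Set Implicit Arguments. Unset Strict Implicit. Unset Printing Implicit Defensive.

Inductive term (Op : Type) (ar : Op -> nat) (X : Type) : Type :=
| Var (x : X)
| App (f : Op) (args : 'I_(ar f) -> term ar X).
Arguments Var {Op ar X} x.
Arguments App {Op ar X} f args.

Fixpoint eval (Op : Type) (ar : Op -> nat) (B : Type)
    (interp : forall f : Op, ('I_(ar f) -> B) -> B) (X : Type) (v : X -> B)
    (t : term ar X) : B :=
  match t with
  | Var x => v x
  | App f args => interp f (fun i => eval interp v (args i))
  end.

(* Substitution (Kleisli extension of the term monad). *)
Fixpoint bind (Op : Type) (ar : Op -> nat) (X Y : Type)
    (t : term ar X) (s : X -> term ar Y) : term ar Y :=
  match t with
  | Var x => s x
  | App f args => App f (fun i => bind (args i) s)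
  end.

(* (B, interp) is a model (T-algebra) of the equational theory E, where E is
   a set of equations between terms in variables nat. *)
Definition is_model (Op : Type) (ar : Op -> nat)
    (E : term ar nat -> term ar nat -> Prop) (B : Type)
    (interp : forall f : Op, ('I_(ar f) -> B) -> B) : Prop :=
  forall l r, E l r -> forall v : nat -> B, eval interp v l = eval interp v r.

(* B is finitely generated by B0 via gen : B0 -> B: the induced T-algebra
   morphism TB0 -> B (t |-> eval gen t) is surjective. *)
Definition generated_by (Op : Type) (ar : Op -> nat) (B : Type)
    (interp : forall f : Op, ('I_(ar f) -> B) -> B) (B0 : Type) (gen : B0 -> B)
    : Prop :=
  forall b : B, exists t : term ar B0, eval interp gen t = b.

(* A T-automaton with finite state set X, output algebra B, output map
   om : X -> B and transitions tm : A -> X -> TX (terms taken as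
   representatives of their classes in TX).  Trace semantics of t in TX
   for the L-coalgebra m# : TX -> B x (TX)^A:
     o(t) = eval of t in B under om;  d_a(t) = t[tm a / vars]. *)
Fixpoint trace_term (Op : Type) (ar : Op -> nat) (B : Type)
    (interp : forall f : Op, ('I_(ar f) -> B) -> B) (A X : Type)
    (om : X -> B) (tm : A -> X -> term ar X) (t : term ar X) (w : seq A) : B :=
  match w with
  | [::] => eval interp om t
  | a :: w' => trace_term interp om tm (bind t (tm a)) w'
  end.

(* [[x]]_m := [[eta_X x]]_{TX} *)
Definition trace_state (Op : Type) (ar : Op -> nat) (B : Type)
    (interp : forall f : Op, ('I_(ar f) -> B) -> B) (A X : Type)
    (om : X -> B) (tm : A -> X -> term ar X) (x : X) : seq A -> B :=
  trace_term interp om tm (Var x).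

(* Raw syntax of the grammar
     delta ::= x | gamma | f(delta,...,delta)
     gamma ::= mu x.(a1.delta ⋔ ... ⋔ an.delta ⋔ beta)
     beta  ::= b | f(beta,...,beta)     (b in B0)
   with variables named by nat; the n branches a_i.delta are given as a
   function A -> rexp, and beta is a Sigma-term over B0. *)
Inductive rexp (Op : Type) (ar : Op -> nat) (A B0 : Type) : Type :=
| RVar (x : nat)
| RMu (x : nat) (d : A -> rexp ar A B0) (beta : term ar B0)
| RApp (f : Op) (args : 'I_(ar f) -> rexp ar A B0).
Arguments RVar {Op ar A B0} x.
Arguments RMu {Op ar A B0} x d beta.
Arguments RApp {Op ar A B0} f args.

Fixpoint occurs_free (Op : Type) (ar : Op -> nat) (A : finType) (B0 : Type)
    (y : nat) (e : rexp ar A B0) : bool :=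
  match e with
  | RVar z => z == y
  | RMu z d _ => (z != y) && [exists a, occurs_free y (d a)]
  | RApp f args => [exists i, occurs_free y (args i)]
  end.

(* Exp_Sigma(B0) = closed expressions. *)
Definition rclosed (Op : Type) (ar : Op -> nat) (A : finType) (B0 : Type)
    (e : rexp ar A B0) : Prop := forall y : nat, ~~ occurs_free y e.

(* Substitution e[g/x] (only used with g closed, so no capture). *)
Fixpoint rsubst (Op : Type) (ar : Op -> nat) (A B0 : Type)
    (x : nat) (g : rexp ar A B0) (e : rexp ar A B0) : rexp ar A B0 :=
  match e with
  | RVar y => if y == x then g else RVar y
  | RMu y d beta =>
      if y == x then RMu y d beta else RMu y (fun a => rsubst x g (d a)) beta
  | RApp f args => RApp f (fun i => rsubst x g (args i))
  end.

Fixpoint rderiv (Op : Type) (ar : Op -> nat) (A B0 : Type)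
    (a : A) (e : rexp ar A B0) : rexp ar A B0 :=
  match e with
  | RVar y => RVar y
  | RMu x d beta => rsubst x (RMu x d beta) (d a)
  | RApp f args => RApp f (fun i => rderiv a (args i))
  end.

Fixpoint rderivs (Op : Type) (ar : Op -> nat) (A B0 : Type)
    (w : seq A) (e : rexp ar A B0) : rexp ar A B0 :=
  match w with
  | [::] => e
  | a :: w' => rderivs w' (rderiv a e)
  end.

(* Output o, given as a relation (its graph); it is total and functional on
   closed expressions:
     o(f(e1..ek)) = f^B(o e1, ..., o ek),  o(mu x.(... ⋔ beta)) = [[beta]]_B. *)
Inductive rout (Op : Type) (ar : Op -> nat) (A B0 B : Type)
    (interp : forall f : Op, ('I_(ar f) -> B) -> B) (gen : B0 -> B)
    : rexp ar A B0 -> B -> Prop :=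
| rout_mu x d beta : rout interp gen (RMu x d beta) (eval interp gen beta)
| rout_app f args (bs : 'I_(ar f) -> B) :
    (forall i, rout interp gen (args i) (bs i)) ->
    rout interp gen (RApp f args) (interp f bs).

Definition rsem_is (Op : Type) (ar : Op -> nat) (A B0 B : Type)
    (interp : forall f : Op, ('I_(ar f) -> B) -> B) (gen : B0 -> B)
    (e : rexp ar A B0) (sigma : seq A -> B) : Prop :=
  forall w : seq A, rout interp gen (rderivs w e) (sigma w).

(* Both directions rest on a coinduction principle (simulation_sem): a relation
   between expressions and terms of an automaton that matches outputs and is
   closed under derivatives relates expressions and terms with equal traces.
   The relations used are congruence closures [cong R] of relations [R]
   between states and expressions, for which the condition need only be
   checked on [R] itself (cong_sem).  Derivatives of mu-expressions are
   handled by a small theory of simultaneous substitution of closed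
   expressions (msubst), whose key fact rderiv_msubst_mu says that deriving a
   substituted mu-expression unfolds it once.
   - Automaton to expression (automaton_to_expression): the state x is unfolded
     into mu x.(a_1.t_1 ⋔ ... ⋔ a_n.t_n ⋔ beta x), recursively unfolding the
     states of the transition terms and turning states met again into
     recursion variables; states and their closed unfoldings form a simulation.
   - Expression to automaton (expression_to_automaton): the states are the
     occurrences of mu-subexpressions of e, whose transitions are read off the
     bodies of the binders; each occurrence is related to the closed expression
     it denotes, and the term denoting e is adjoined as a state (term_as_state). *)

From mathcomp Require Import all_boot.
From Stdlib Require Import FunctionalExtensionality ClassicalEpsilon.
Set Implicit Arguments. Unset Strict Implicit. Unset Printing Implicit Defensive.

Definition env_upd (T : Type) (rho : nat -> T) (n : nat) (v : T) : nat -> T :=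
  fun k => if k == n then v else rho k.

Lemma env_upd_upd (T : Type) (rho : nat -> T) n v w :
  env_upd (env_upd rho n v) n w = env_upd rho n w.
Proof.
by apply: functional_extensionality => k; rewrite /env_upd; case: (k == n).
Qed.

Section Substitution.
Variables (Op : Type) (ar : Op -> nat) (A : finType) (B0 : Type).
Local Notation rexp := (rexp ar A B0).

Fixpoint msubst (rho : nat -> option rexp) (e : rexp) : rexp :=
  match e with
  | RVar n => if rho n is Some g then g else RVar n
  | RMu n d beta => RMu n (fun a => msubst (env_upd rho n None) (d a)) beta
  | RApp f args => RApp f (fun i => msubst rho (args i))
  end.

(* All values of the environment are closed expressions, so that [msubst]
   never captures variables. *)
Definition closed_env (rho : nat -> option rexp) : Prop :=
  forall k h, rho k = Some h -> rclosed h.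

Lemma closed_env_del rho n : closed_env rho -> closed_env (env_upd rho n None).
Proof. by move=> Hrho k h; rewrite /env_upd; case: (k == n) => //; apply: Hrho. Qed.

Lemma closed_env_set rho n g :
  closed_env rho -> rclosed g -> closed_env (env_upd rho n (Some g)).
Proof. by move=> Hrho Hg k h; rewrite /env_upd; case: (k == n) => [[<-]|]; last exact: Hrho. Qed.

Lemma msubst_empty e : msubst (fun _ => None) e = e.
Proof.
elim: e => [n|n d IH beta|f args IH] //=.
- have -> : env_upd (fun _ => None) n None = (fun _ => None : option rexp).
    by apply: functional_extensionality => k; rewrite /env_upd; case: (k == n).
  by congr RMu; apply: functional_extensionality => a.
- by congr RApp; apply: functional_extensionality => i.
Qed.

Lemma rsubst_notfree n (g e : rexp) : ~~ occurs_free n e -> rsubst n g e = e.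
Proof.
elim: e => [y|y d IH beta|f args IH] /=.
- by move=> Hn; rewrite (negbTE Hn).
- case: eqP => [//|Hy] Hn; congr RMu; apply: functional_extensionality => a.
  apply: IH; apply: contra Hn => Ha; apply/andP; split; first exact/eqP.
  by apply/existsP; exists a.
- move/existsPn => Hn; congr RApp; apply: functional_extensionality => i.
  exact: IH.
Qed.

Lemma occurs_free_msubst rho e n : closed_env rho ->
  occurs_free n (msubst rho e) -> occurs_free n e /\ rho n = None.
Proof.
elim: e rho => [y|y d IH beta|f args IH] rho Hrho /=.
- case Ey: (rho y) => [h|]; first by rewrite (negbTE (Hrho _ _ Ey n)).
  by move=> /eqP <-.
- case/andP=> Hy /existsP [a Ha].
  have [Hfree Hn] := IH a _ (closed_env_del (n := y) Hrho) Ha.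
  split; first by rewrite Hy; apply/existsP; exists a.
  by move: Hn; rewrite /env_upd eq_sym (negbTE Hy).
- case/existsP=> i /(IH i _ Hrho) [Hfree Hn].
  by split => //; apply/existsP; exists i.
Qed.

Lemma msubst_closed rho e : closed_env rho ->
  (forall n, occurs_free n e -> rho n <> None) -> rclosed (msubst rho e).
Proof.
move=> Hrho Hdom n; apply/negP => /(occurs_free_msubst Hrho) [Hn].
exact: Hdom.
Qed.

Lemma rsubst_msubst rho n (g e : rexp) : closed_env rho -> rho n = None ->
  rsubst n g (msubst rho e) = msubst (env_upd rho n (Some g)) e.
Proof.
elim: e rho => [y|y d IH beta|f args IH] rho Hrho Hn /=.
- rewrite /env_upd; case: (eqVneq y n) => [->|Hy]; first by rewrite Hn /= eqxx.
  case Ey: (rho y) => [h|] /=; last by rewrite (negbTE Hy).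
  exact: rsubst_notfree (Hrho _ _ Ey n).
- case: (eqVneq y n) => [->|Hy]; first by rewrite env_upd_upd.
  congr RMu; apply: functional_extensionality => a; rewrite IH; [|exact: closed_env_del|by rewrite /env_upd eq_sym (negbTE Hy)].
  congr msubst; apply: functional_extensionality => k; rewrite /env_upd.
  by case: (eqVneq k n) => [->|//]; rewrite eq_sym (negbTE Hy).
- congr RApp; apply: functional_extensionality => i; exact: IH.
Qed.

Lemma rderiv_msubst_mu rho n d beta a : closed_env rho ->
  rderiv a (msubst rho (RMu n d beta)) =
  msubst (env_upd rho n (Some (msubst rho (RMu n d beta)))) (d a).
Proof.
move=> Hrho /=; rewrite rsubst_msubst; last 2 first.
- exact: closed_env_del.
- by rewrite /env_upd eqxx.
by rewrite env_upd_upd.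
Qed.

Fixpoint term_rexp (Y : Type) (t : term ar Y) (k : Y -> rexp) : rexp :=
  match t with
  | Var z => k z
  | App f args => RApp f (fun i => term_rexp (args i) k)
  end.

Lemma msubst_term_rexp rho (Y : Type) (t : term ar Y) k :
  msubst rho (term_rexp t k) = term_rexp t (fun z => msubst rho (k z)).
Proof.
elim: t => [z|f args IH] //=; congr RApp; apply: functional_extensionality => i.
exact: IH.
Qed.

Lemma occurs_free_term_rexp (Y : Type) (t : term ar Y) k n :
  occurs_free n (term_rexp t k) -> exists z, occurs_free n (k z).
Proof.
elim: t => [z|f args IH] /=; first by exists z.
by case/existsP => i /IH.
Qed.

End Substitution.

Section Simulation.
Variables (Op : Type) (ar : Op -> nat) (A : finType) (B0 B : Type).
Variables (interp : forall f : Op, ('I_(ar f) -> B) -> B) (gen : B0 -> B).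
Variables (X : Type) (om : X -> B) (tm : A -> X -> term ar X).
Local Notation rexp := (rexp ar A B0).

Lemma simulation_sem (R : rexp -> term ar X -> Prop) :
  (forall e t, R e t -> rout interp gen e (eval interp om t) /\
      forall a, R (rderiv a e) (bind t (tm a))) ->
  forall e t, R e t -> rsem_is interp gen e (trace_term interp om tm t).
Proof.
move=> Hsim e t Ret w; elim: w e t Ret => [|a w IH] e t Ret /=.
  by case: (Hsim _ _ Ret).
by apply: IH; case: (Hsim _ _ Ret) => _; apply.
Qed.

Inductive cong (R : X -> rexp -> Prop) : rexp -> term ar X -> Prop :=
| cong_var x h : R x h -> cong R h (Var x)
| cong_app f args ts :
    (forall i, cong R (args i) (ts i)) -> cong R (RApp f args) (App f ts).

Definition state_sim (R : X -> rexp -> Prop) : Prop :=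
  forall x h, R x h ->
    rout interp gen h (om x) /\ forall a, cong R (rderiv a h) (tm a x).

(* Since outputs and derivatives are computed componentwise on both sides,
   the congruence closure of a state simulation is a simulation. *)
Lemma cong_sem R : state_sim R ->
  forall e t, cong R e t -> rsem_is interp gen e (trace_term interp om tm t).
Proof.
move=> HR; apply: simulation_sem => e t; elim=> [x h /HR //|f args ts _ IH].
split; first by constructor => i; case: (IH i).
by move=> a /=; constructor => i; case: (IH i) => _; apply.
Qed.

Lemma cong_term_rexp R (t : term ar X) (k : X -> rexp) :
  (forall z, cong R (k z) (Var z)) -> cong R (term_rexp t k) t.
Proof. by move=> Hk; elim: t => [z|f args IH] /=; [exact: Hk|constructor]. Qed.

End Simulation.

Section AutomatonToExpression.
Variables (Op : Type) (ar : Op -> nat) (A : finType) (B0 : Type).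
Variables (X : finType) (tm : A -> X -> term ar X) (beta : X -> term ar B0).
Local Notation rexp := (rexp ar A B0).

Definition state_var (x : X) : nat := enum_rank x.

Lemma state_var_inj : injective state_var.
Proof. by move=> x y /ord_inj /enum_rank_inj. Qed.

(* The fuel [k]
   bounds the depth and suffices as soon as [#|X| <= k + size V]. *)
Fixpoint unfold (k : nat) (y : X) (V : seq X) : rexp :=
  if k is k'.+1 then
    if y \in V then RVar (state_var y)
    else RMu (state_var y)
           (fun a => term_rexp (tm a y) (fun z => unfold k' z (y :: V))) (beta y)
  else RVar (state_var y).

Lemma unfold_visited k y V : y \in V -> unfold k y V = RVar (state_var y).
Proof. by case: k => //= k ->. Qed.

Lemma size_avoiding (y : X) (V : seq X) :
  y \notin V -> uniq V -> size V < #|X|.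
Proof.
move=> Hy HV; have HyV : uniq (y :: V) by rewrite /= Hy.
by rewrite -ltnS -[(size V).+1]/(size (y :: V)) -(card_uniqP HyV) ltnS max_card.
Qed.

Lemma unfold_unvisited k y V : y \notin V -> uniq V -> #|X| <= k + size V ->
  unfold k y V = RMu (state_var y)
    (fun a => term_rexp (tm a y) (fun z => unfold k.-1 z (y :: V))) (beta y).
Proof.
move=> Hy HV; case: k => [|k] Hk /=; last by rewrite (negbTE Hy).
by move: Hk; rewrite leqNgt (size_avoiding Hy HV).
Qed.

Lemma occurs_free_unfold k y V n :
  uniq V -> #|X| <= k + size V -> occurs_free n (unfold k y V) ->
  exists2 v, v \in V & n = state_var v.
Proof.
elim: k y V => [|k IH] y V HV Hk /=; case: (boolP (y \in V)) => Hy;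
  try by move/eqP=> <-; exists y.
- by move: Hk; rewrite leqNgt (size_avoiding Hy HV).
- case/andP=> Hn /existsP [a /occurs_free_term_rexp [z Hz]].
  have HyV : uniq (y :: V) by rewrite /= Hy.
  have Hk' : #|X| <= k + size (y :: V) by rewrite /= addnS.
  have [v] := IH z _ HyV Hk' Hz.
  rewrite inE => /orP [/eqP ->|Hv] Hnv; last by exists v.
  by move: Hn; rewrite Hnv eqxx.
Qed.

Inductive unfolding : X -> rexp -> Prop :=
| unfolding_intro y V k rho :
    y \notin V -> uniq V -> #|X| <= k + size V -> closed_env rho ->
    (forall v, v \in V -> exists2 h, rho (state_var v) = Some h & unfolding v h) ->
    unfolding y (msubst rho (unfold k y V)).

Lemma unfolding_closed y h : unfolding y h -> rclosed h.
Proof.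
case=> x V k rho _ HV Hk Hrho HVrho n; apply/negP.
move=> /(occurs_free_msubst Hrho) [/(occurs_free_unfold HV Hk) [v Hv ->]].
by have [g -> _] := HVrho v Hv.
Qed.

Lemma unfolding_env_upd y V rho h : unfolding y h ->
  (forall v, v \in V -> exists2 h', rho (state_var v) = Some h' & unfolding v h') ->
  forall v, v \in y :: V ->
    exists2 h', env_upd rho (state_var y) (Some h) (state_var v) = Some h' & unfolding v h'.
Proof.
move=> Hyh HVrho v; rewrite inE /env_upd; case: (eqVneq v y) => [-> _|Hvy /= Hv].
  by rewrite eqxx; exists h.
by rewrite (inj_eq state_var_inj) (negbTE Hvy); exact: HVrho.
Qed.

Section Semantics.
Variables (B : Type) (interp : forall f : Op, ('I_(ar f) -> B) -> B).
Variables (gen : B0 -> B) (om : X -> B).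
Hypothesis beta_out : forall x, eval interp gen (beta x) = om x.

Lemma unfolding_out y h : unfolding y h -> rout interp gen h (om y).
Proof.
case=> x V k rho Hx HV Hk _ _.
by rewrite (unfold_unvisited Hx HV Hk) -beta_out; exact: rout_mu.
Qed.

(* The derivative of an unfolding of [y] unfolds the transition term of [y]:
   a visited state becomes its recorded unfolding, a new state is unfolded
   with one more enclosing binder. *)
Lemma unfolding_deriv y h a : unfolding y h -> cong unfolding (rderiv a h) (tm a y).
Proof.
move=> Hyh; have Hcl := unfolding_closed Hyh.
case: Hyh Hcl => {}y V k rho Hy HV Hk Hrho HVrho {h}.
set h := msubst rho (unfold k y V) => Hcl.
have Hyh : unfolding y h by exact: unfolding_intro.
have Hk0 : 0 < k.
  rewrite lt0n; apply/eqP => Ek; move: Hk.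
  by rewrite Ek add0n leqNgt (size_avoiding Hy HV).
rewrite {1}/h (unfold_unvisited Hy HV Hk) rderiv_msubst_mu //.
rewrite -(unfold_unvisited Hy HV Hk) -/h msubst_term_rexp.
apply: cong_term_rexp => z; apply: cong_var.
have HyV := unfolding_env_upd Hyh HVrho.
case: (boolP (z \in y :: V)) => Hz.
  by rewrite unfold_visited //=; have [h' -> Hzh'] := HyV z Hz.
apply: unfolding_intro => //.
- by rewrite /= Hy HV.
- by rewrite /= addnS -addSn prednK.
- exact: closed_env_set.
Qed.

Lemma unfolding_state_sim : state_sim interp gen om tm unfolding.
Proof. by move=> y h Hyh; split; [exact: unfolding_out|move=> a; exact: unfolding_deriv]. Qed.

End Semantics.

End AutomatonToExpression.

(* Every state of a T-automaton with output algebra generated by [B0] has the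
   semantics of a reactive expression: the unfolding of the automaton from
   that state, whose output terms [beta y] are generators-terms for [om y]. *)
Lemma automaton_to_expression (Op : Type) (ar : Op -> nat) (A : finType)
    (B : Type) (interp : forall f : Op, ('I_(ar f) -> B) -> B)
    (B0 : Type) (gen : B0 -> B) (Hgen : generated_by interp gen)
    (X : finType) (om : X -> B) (tm : A -> X -> term ar X) (x : X) :
  exists e : rexp ar A B0,
    rclosed e /\ rsem_is interp gen e (trace_state interp om tm x).
Proof.
have [beta beta_out] := choice (fun y t => eval interp gen t = om y) (fun y => Hgen (om y)).
have Hx : unfolding tm beta x (unfold tm beta #|X| x [::]).
  by rewrite -[unfold _ _ _ _ _]msubst_empty; apply: unfolding_intro => //; rewrite addn0.
exists (unfold tm beta #|X| x [::]); split.
  exact: unfolding_closed Hx.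
apply: cong_sem (unfolding_state_sim beta_out) _ _ (cong_var Hx).
Qed.

Lemma rout_total (Op : Type) (ar : Op -> nat) (A : finType) (B0 B : Type)
    (interp : forall f : Op, ('I_(ar f) -> B) -> B) (gen : B0 -> B)
    (e : rexp ar A B0) : rclosed e -> exists b, rout interp gen e b.
Proof.
elim: e => [n|n d IH beta|f args IH] Hcl.
- by have := Hcl n; rewrite /= eqxx.
- by exists (eval interp gen beta); exact: rout_mu.
- have Hargs i : exists b, rout interp gen (args i) b.
    apply: IH => m; apply: contra (Hcl m) => Hm.
    by apply/existsP; exists i.
  have [bs Hbs] := choice _ Hargs.
  by exists (interp f bs); exact: rout_app.
Qed.

Section TermMonad.
Variables (Op : Type) (ar : Op -> nat).

Lemma eval_bind (B : Type) (interp : forall f : Op, ('I_(ar f) -> B) -> B)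
    (X Y : Type) (v : Y -> B) (t : term ar X) (s : X -> term ar Y) :
  eval interp v (bind t s) = eval interp (fun x => eval interp v (s x)) t.
Proof.
elim: t => [x|f args IH] //=; congr interp; apply: functional_extensionality => i.
exact: IH.
Qed.

Lemma bind_bind (X Y W : Type) (t : term ar X) (s1 : X -> term ar Y)
    (s2 : Y -> term ar W) :
  bind (bind t s1) s2 = bind t (fun x => bind (s1 x) s2).
Proof.
elim: t => [x|f args IH] //=; congr App; apply: functional_extensionality => i.
exact: IH.
Qed.

(* Any term [t] of a T-automaton becomes a state: adjoin a fresh state with
   the output and the transitions of [t]. *)
Lemma term_as_state (A : Type) (B : Type) (interp : forall f : Op, ('I_(ar f) -> B) -> B)
    (X : Type) (om : X -> B) (tm : A -> X -> term ar X) (t : term ar X) :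
  exists (om' : option X -> B) (tm' : A -> option X -> term ar (option X)),
    trace_state interp om' tm' None = trace_term interp om tm t.
Proof.
pose old (u : term ar X) : term ar (option X) := bind u (fun z => Var (Some z)).
pose om' z := if z is Some x then om x else eval interp om t.
pose tm' a z := if z is Some x then old (tm a x) else old (bind t (tm a)).
have old_trace w u : trace_term interp om' tm' (old u) w = trace_term interp om tm u w.
  elim: w u => [|a w IH] u /=; first by rewrite eval_bind.
  by rewrite bind_bind -IH /old bind_bind.
exists om', tm'; apply: functional_extensionality => -[|a w] //=.
exact: old_trace.
Qed.

End TermMonad.

Section ExpressionToAutomaton.
Variables (Op : Type) (ar : Op -> nat) (A : finType) (B0 : Type).
Local Notation rexp := (rexp ar A B0).

(* The type of occurrences depends on the expression, which must therefore
   stay an explicit argument of the functions defined by recursion on it. *)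
Local Unset Implicit Arguments.

(* The occurrences of mu-subexpressions in [e]; they become the states of the
   automaton of [e] ([None] marks the mu-node itself). *)
Fixpoint mu_pos (e : rexp) : finType :=
  match e with
  | RVar _ => void
  | RMu _ d _ => option {a : A & mu_pos (d a)}
  | RApp f args => {i : 'I_(ar f) & mu_pos (args i)}
  end.

(* The closed expression at an occurrence: the mu-subexpression with its free
   variables bound by [rho] and by the enclosing mu-binders. *)
Fixpoint pos_expr (e : rexp) (rho : nat -> option rexp) : mu_pos e -> rexp :=
  match e as e0 return mu_pos e0 -> rexp with
  | RVar _ => fun s => match s with end
  | RMu n d beta => fun s =>
      if s is Some (existT a s') then
        pos_expr (d a) (env_upd rho n (Some (msubst rho (RMu n d beta)))) s'
      else msubst rho (RMu n d beta)
  | RApp f args => fun s => let: existT i s' := s in pos_expr (args i) rho s'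
  end.

(* The term of the automaton denoting [e], with mu-occurrences named by the
   states [iota] and free variables denoted by the terms [env]. *)
Fixpoint init_term {Z : Type} (e : rexp) :
    (mu_pos e -> Z) -> (nat -> term ar Z) -> term ar Z :=
  match e as e0 return (mu_pos e0 -> Z) -> (nat -> term ar Z) -> term ar Z with
  | RVar n => fun _ env => env n
  | RMu _ _ _ => fun iota _ => Var (iota None)
  | RApp f args => fun iota env =>
      App f (fun i => init_term (args i) (fun s => iota (existT _ i s)) env)
  end.

(* The [a]-transition of an occurrence of [mu n.(... ⋔ b.d_b ⋔ ...)]: the
   term of [d_a], in which the variable [n] denotes the occurrence itself. *)
Fixpoint pos_trans {Z : Type} (e : rexp) :
    (mu_pos e -> Z) -> (nat -> term ar Z) -> A -> mu_pos e -> term ar Z :=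
  match e as e0 return (mu_pos e0 -> Z) -> (nat -> term ar Z) -> A -> mu_pos e0 -> term ar Z with
  | RVar _ => fun _ _ _ s => match s with end
  | RMu n d _ => fun iota env a s =>
      let env' := env_upd env n (Var (iota None)) in
      if s is Some (existT b s') then
        pos_trans (d b) (fun s'' => iota (Some (existT _ b s''))) env' a s'
      else init_term (d a) (fun s'' => iota (Some (existT _ a s''))) env'
  | RApp f args => fun iota env a s =>
      let: existT i s' := s in
      pos_trans (args i) (fun s'' => iota (existT _ i s'')) env a s'
  end.

Fixpoint pos_beta (e : rexp) : mu_pos e -> term ar B0 :=
  match e as e0 return mu_pos e0 -> term ar B0 with
  | RVar _ => fun s => match s with end
  | RMu _ d beta => fun s => if s is Some (existT a s') then pos_beta (d a) s' else beta
  | RApp f args => fun s => let: existT i s' := s in pos_beta (args i) s'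
  end.

Lemma rout_pos_expr (B : Type) (interp : forall f : Op, ('I_(ar f) -> B) -> B)
    (gen : B0 -> B) e rho s :
  rout interp gen (pos_expr e rho s) (eval interp gen (pos_beta e s)).
Proof.
elim: e rho s => [n|n d IH beta|f args IH] rho s /=.
- by case: s.
- by case: s => [[a s']|]; [exact: IH|exact: rout_mu].
- by case: s => i s'; exact: IH.
Qed.

Section Compatibility.
Variables (Z : Type) (R : Z -> rexp -> Prop).

Definition compatible (e : rexp) (rho : nat -> option rexp)
    (iota : mu_pos e -> Z) (env : nat -> term ar Z) : Prop :=
  [/\ closed_env rho, (forall m h, rho m = Some h -> cong R h (env m)),
      (forall m, occurs_free m e -> rho m <> None) &
      (forall s, R (iota s) (pos_expr e rho s))].

(* In the lemmas below the expression is determined by the hypotheses. *)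
Local Set Implicit Arguments.

Lemma compatible_app f args rho iota env i :
  compatible (RApp f args) rho iota env ->
  compatible (args i) rho (fun s => iota (existT _ i s)) env.
Proof.
case=> Hrho Henv Hdom Hiota; split=> // m Hm.
by apply: Hdom => /=; apply/existsP; exists i.
Qed.

Lemma compatible_mu n d beta rho iota env b :
  compatible (RMu n d beta) rho iota env ->
  compatible (d b) (env_upd rho n (Some (msubst rho (RMu n d beta))))
    (fun s => iota (Some (existT _ b s))) (env_upd env n (Var (iota None))).
Proof.
case=> Hrho Henv Hdom Hiota; split => //.
- apply: (closed_env_set Hrho); apply: (msubst_closed Hrho) => m Hm.
  exact: Hdom.
- move=> m h; rewrite /env_upd; case: (m == n) => [[<-]|]; last exact: Henv.
  exact: cong_var (Hiota None).
- move=> m Hm; rewrite /env_upd; case: (eqVneq m n) => // Hmn.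
  by apply: Hdom => /=; rewrite eq_sym Hmn /=; apply/existsP; exists b.
Qed.

Lemma cong_init_term e rho iota env :
  compatible e rho iota env -> cong R (msubst rho e) (init_term e iota env).
Proof.
elim: e rho iota env => [n|n d IH beta|f args IH] rho iota env Hcomp /=.
- case: Hcomp => _ Henv Hdom _; case En: (rho n) => [h|]; first exact: Henv.
  by case: (Hdom n) => //=.
- by case: Hcomp => _ _ _ /(_ None); exact: cong_var.
- by constructor => i; apply: IH; exact: compatible_app.
Qed.

Lemma cong_pos_trans e rho iota env a s :
  compatible e rho iota env ->
  cong R (rderiv a (pos_expr e rho s)) (pos_trans e iota env a s).
Proof.
elim: e rho iota env s => [n|n d IH beta|f args IH] rho iota env s Hcomp.
- by case: s.
- case: s => [[b s']|]; first exact/IH/compatible_mu.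
  have [Hrho _ _ _] := Hcomp.
  rewrite [pos_expr _ _ _]/= rderiv_msubst_mu //.
  exact/cong_init_term/compatible_mu.
- by case: s => i s' /=; exact/IH/compatible_app.
Qed.

End Compatibility.

End ExpressionToAutomaton.

Arguments mu_pos {Op ar A B0} e.
Arguments pos_expr {Op ar A B0} e rho s.
Arguments pos_beta {Op ar A B0} e s.
Arguments init_term {Op ar A B0 Z} e iota env.
Arguments pos_trans {Op ar A B0 Z} e iota env a s.
Arguments compatible {Op ar A B0 Z} R e rho iota env.

(* Every closed reactive expression [e] is the semantics of a state of a
   T-automaton: states are the mu-occurrences of [e] plus a sink [None] (the
   image of free variables, of which there are none), related to their closed
   expressions; the term denoting [e] is then made into a state. *)
Lemma expression_to_automaton (Op : Type) (ar : Op -> nat) (A : finType)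
    (B : Type) (interp : forall f : Op, ('I_(ar f) -> B) -> B)
    (B0 : Type) (gen : B0 -> B) (e : rexp ar A B0) :
  rclosed e ->
  exists (X : finType) (om : X -> B) (tm : A -> X -> term ar X) (x : X),
    rsem_is interp gen e (trace_state interp om tm x).
Proof.
move=> Hcl; have [b0 _] := rout_total interp gen Hcl.
pose env (_ : nat) : term ar (option (mu_pos e)) := Var None.
pose om z := if z is Some s then eval interp gen (pos_beta e s) else b0.
pose tm a z := if z is Some s then pos_trans e Some env a s else Var None.
pose R z h := if z is Some s then h = pos_expr e (fun _ => None) s else False.
have Hcomp : compatible R e (fun _ => None) Some env.
  by split=> // m Hm; have := Hcl m; rewrite Hm.
have Hsim : state_sim interp gen om tm R.
  move=> [s|] h //= ->; split; first exact: rout_pos_expr.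
  by move=> a; exact: cong_pos_trans.
have Hinit : cong R e (init_term e Some env).
  by have := cong_init_term Hcomp; rewrite msubst_empty.
have [om' [tm' Hroot]] := term_as_state interp om tm (init_term e Some env).
by exists _, om', tm', None; rewrite Hroot; exact: cong_sem Hsim _ _ Hinit.
Qed.

Theorem mainTheorem4
  (Op : Type) (ar : Op -> nat)
  (E : term ar nat -> term ar nat -> Prop)
  (A : finType)
  (B : Type) (interp : forall f : Op, ('I_(ar f) -> B) -> B)
  (HB : is_model E interp)
  (B0 : finType) (gen : B0 -> B) (Hgen : generated_by interp gen) :
  (forall e : rexp ar A B0, rclosed e ->
     exists (X : finType) (om : X -> B) (tm : A -> X -> term ar X) (x : X),
       rsem_is interp gen e (trace_state interp om tm x))
  /\
  (forall (X : finType) (om : X -> B) (tm : A -> X -> term ar X) (x : X),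
     exists e : rexp ar A B0,
       rclosed e /\ rsem_is interp gen e (trace_state interp om tm x)).
Proof.
split.
- exact: expression_to_automaton.
- exact: automaton_to_expression Hgen.
Qed.
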